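(* For every positive integer $m$, \begin{align*} \zeta^\star(2,\{1\}_m,\bar 1)=&\frac{m+2}{(m+3)!}(-1)^m\ln^{m+3}(2)+(m+2)(-1)^m\left(\zeta(m+3)-\mathrm{Li}_{m+3}\!\left(\tfrac12\right)\right)\\ &-(m+2)(-1)^m\sum_{j=1}^{m+2}\frac{\ln^{m+3-j}(2)}{(m+3-j)!}\mathrm{Li}_j\!\left(\tfrac12\right)-\frac32\frac{(-1)^m}{(m+1)!}\zeta(2)\ln^{m+1}(2)\\ &-\frac{(-1)^m}{(m+1)!}\sum_{i=1}^{m}(-1)^{i-1}\, i!\binom{m+1}{i}\ln^{m+1-i}(2)\Big\{\zeta^\star(2,\{1\}_{i-1},\bar 1)-\zeta^\star(2,\{1\}_i)\Big\}, \end{align*} where $\zeta^\star(2,\bar 1)=\frac14\zeta(3)-\frac32\zeta(2)\ln(2)$.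
   Context: For nonzero integers $s_1,\dots,s_k$, with $\operatorname{sgn}(s)=1$ if $s>0$ and $-1$ if $s<0$, the multiple zeta star value is $\zeta^\star(s_1,\dots,s_k)=\sum_{n_1\ge n_2\ge\cdots\ge n_k\ge 1}\prod_{j=1}^k n_j^{-|s_j|}\operatorname{sgn}(s_j)^{n_j}$. A barred entry $\bar p$ denotes the negative entry $-p$. The notation $\{1\}_d$ means the entry $1$ repeated $d$ times ($d=0$ means no entries). $\zeta(s)=\sum_{n\ge1}n^{-s}$ is the Riemann zeta function and $\mathrm{Li}_s(x)=\sum_{n\ge1}x^n/n^s$ is the polylogarithm. *)

From Stdlib Require Import Reals ZArith List.
From Coquelicot Require Import Coquelicot.
Open Scope R_scope.

Fixpoint sumR (f : nat -> R) (N : nat) : R :=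
  match N with
  | O => 0
  | S k => sumR f k + f (S k)
  end.

Definition mzs_term (s : Z) (n : nat) : R :=
  (if Z.ltb 0 s then 1 else -1) ^ n / (INR n) ^ (Z.to_nat (Z.abs s)).

(* Truncated star sum: sum over N >= n_1 >= n_2 >= ... >= n_k >= 1. *)
Fixpoint mzsp (l : list Z) (N : nat) : R :=
  match l with
  | nil => 1
  | s :: t => sumR (fun n => mzs_term s n * mzsp t n) N
  end.

Definition mzs (l : list Z) : R := real (Lim_seq (fun N => mzsp l N)).

Definition zetaR (s : nat) : R := Series (fun k => 1 / (INR (S k)) ^ s).
Definition Li (s : nat) (x : R) : R := Series (fun k => x ^ (S k) / (INR (S k)) ^ s).

Definition ones (d : nat) : list Z := repeat 1%Z d.

From Stdlib Require Import Reals ZArith List Lia Lra.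
From Coquelicot Require Import Coquelicot.
Open Scope R_scope.

(* Write [W s = 1 - e^s] and [I(m,n) = \int_0^{ln 2} s^m W(s)^n ds].  Integrating by parts,
   [Phi(m,n) = (-1)^m/m! (I(m,n) - I(m,0))] satisfies the same recursion in [n] as the
   truncated star sums, which gives
     [Phi(m,n) = \sum_{r=0}^m (-ln 2)^r/r! (zeta*_n({1}_{m-r},-1) - zeta*_n({1}_{m-r},1))
                 + zeta*_n({1}_{m+1})].
   Weighting by [1/n^2] and summing over [n <= N], the [r = 0] term yields the truncation
   of [zeta*(2,{1}_m,-1)] and the others the lower-depth corrections of the theorem, while
   [\sum_n Phi(m,n)/n^2 = (-1)^m/m! \int s^m \sum_n (W^n - 1)/n^2 ds].  A second
   integration by parts splits this into the boundary term
   [(ln 2)^{m+1} \sum_n ((-1)^n - 1)/n^2 -> -3/2 zeta(2) (ln 2)^{m+1}] and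
   [\int s^{m+1} e^s \sum_{n <= N} W^{n-1}/n ds]; since [\sum_n W^{n-1}/n = s/(e^s - 1)],
   the integrand tends to [s^{m+2} \sum_{k >= 0} e^{-ks}], whose termwise integrals are
   explicit and produce [zeta(m+3)] and the [Li_j(1/2)].  All the star sums involved converge
   because [zeta*_n({1}_i) <= 2^i (2n)!!/(2n-1)!!], which is [O(2^i sqrt n)]. *)

Lemma sumR_ext f g N :
  (forall n, (1 <= n <= N)%nat -> f n = g n) -> sumR f N = sumR g N.
Proof.
  induction N as [|N IHN]; intros Hfg; simpl; [reflexivity |].
  f_equal; [apply IHN; intros |]; apply Hfg; lia.
Qed.

Lemma sumR_plus f g N : sumR (fun n => f n + g n) N = sumR f N + sumR g N.
Proof. induction N; simpl; [lra | rewrite IHN; lra]. Qed.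

Lemma sumR_minus f g N : sumR (fun n => f n - g n) N = sumR f N - sumR g N.
Proof. induction N; simpl; [lra | rewrite IHN; lra]. Qed.

Lemma sumR_scal_l c f N : sumR (fun n => c * f n) N = c * sumR f N.
Proof. induction N; simpl; [lra | rewrite IHN; lra]. Qed.

Lemma sumR_0 N : sumR (fun _ => 0) N = 0.
Proof. induction N; simpl; [lra | rewrite IHN; lra]. Qed.

Lemma sumR_rev f N : sumR f N = sumR (fun i => f (S N - i)%nat) N.
Proof.
  assert (Hshift : forall g M, sumR g (S M) = g 1%nat + sumR (fun i => g (S i)) M).
  { intros g M; induction M; simpl in *; [lra | rewrite IHM; lra]. }
  revert f; induction N as [|N IHN]; intros f; [reflexivity |].
  rewrite (Hshift (fun i => f (S (S N) - i)%nat)).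
  change (sumR f (S N)) with (sumR f N + f (S N)).
  rewrite IHN. replace (S (S N) - 1)%nat with (S N) by lia. simpl. lra.
Qed.

Lemma sumR_swap (f : nat -> nat -> R) N M :
  sumR (fun n => sumR (fun r => f n r) M) N = sumR (fun r => sumR (fun n => f n r) N) M.
Proof.
  induction N as [|N IHN]; simpl.
  - rewrite sumR_0; reflexivity.
  - rewrite IHN, <- sumR_plus; reflexivity.
Qed.

Lemma sumR_even_odd f M :
  sumR f (2 * M) = sumR (fun k => f (2 * k)%nat) M + sumR (fun k => f (2 * k - 1)%nat) M.
Proof.
  induction M as [|M IHM]; [simpl; lra |].
  replace (2 * S M)%nat with (S (S (2 * M))) by lia.
  change (sumR f (S (S (2 * M)))) with (sumR f (2 * M) + f (S (2 * M)) + f (S (S (2 * M)))).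
  cbn [sumR]. rewrite IHM.
  replace (2 * S M)%nat with (S (S (2 * M))) by lia.
  replace (S (S (2 * M)) - 1)%nat with (S (2 * M)) by lia. lra.
Qed.

Lemma sumR_sum_n f N : sumR f (S N) = sum_n (fun k => f (S k)) N.
Proof.
  induction N as [|N IHN].
  - rewrite sum_O; simpl; lra.
  - rewrite sum_Sn, <- IHN; reflexivity.
Qed.

Lemma sum_f_R0_sumR f m : sum_f_R0 f m = f 0%nat + sumR f m.
Proof. induction m; simpl; [ring | rewrite IHm; ring]. Qed.

Lemma sum_f_R0_sumR_swap (g : nat -> nat -> R) p N :
  sum_f_R0 (fun j => sumR (fun k => g j k) N) p = sumR (fun k => sum_f_R0 (fun j => g j k) p) N.
Proof. induction p; simpl; [reflexivity | rewrite IHp, <- sumR_plus; reflexivity]. Qed.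

Lemma is_lim_seq_sumR (f : nat -> nat -> R) (l : nat -> R) M :
  (forall r, (1 <= r <= M)%nat -> is_lim_seq (f r) (l r)) ->
  is_lim_seq (fun N => sumR (fun r => f r N) M) (sumR l M).
Proof.
  induction M; intros Hf; simpl.
  - apply is_lim_seq_const.
  - apply is_lim_seq_plus'; [apply IHM; intros | ]; apply Hf; lia.
Qed.

Lemma is_lim_seq_sum_f_R0 (f : nat -> nat -> R) (l : nat -> R) M :
  (forall r, (r <= M)%nat -> is_lim_seq (f r) (l r)) ->
  is_lim_seq (fun N => sum_f_R0 (fun r => f r N) M) (sum_f_R0 l M).
Proof.
  induction M; intros Hf; simpl.
  - apply Hf; lia.
  - apply is_lim_seq_plus'; [apply IHM; intros | ]; apply Hf; lia.
Qed.

Lemma is_lim_seq_sumR_series (a : nat -> R) l :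
  is_lim_seq (sumR a) (Finite l) -> Series (fun k => a (S k)) = l.
Proof.
  intros Ha. apply is_series_unique.
  apply is_lim_seq_incr_1 in Ha.
  apply (is_lim_seq_ext _ (sum_n (fun k => a (S k)))) in Ha; [exact Ha |].
  intros n; apply sumR_sum_n.
Qed.

(** * Truncated star sums *)

Lemma mzs_term_1 n : mzs_term 1%Z n = / INR n.
Proof. unfold mzs_term; simpl. rewrite pow1, Rmult_1_r. unfold Rdiv; ring. Qed.

Lemma mzs_term_m1 n : mzs_term (-1)%Z n = (-1) ^ n / INR n.
Proof. unfold mzs_term; simpl. rewrite Rmult_1_r; reflexivity. Qed.

Lemma mzs_term_2 n : mzs_term 2%Z n = / INR n ^ 2.
Proof. unfold mzs_term; simpl. rewrite pow1, Rmult_1_r. unfold Rdiv; ring. Qed.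

Lemma ones_S i : ones (S i) = ones i ++ 1%Z :: nil.
Proof. apply repeat_cons. Qed.

Lemma mzsp_2 l N : mzsp (2%Z :: l) N = sumR (fun n => / INR n ^ 2 * mzsp l n) N.
Proof. apply sumR_ext; intros; rewrite mzs_term_2; reflexivity. Qed.

Definition zstar_ones (i : nat) : nat -> R := mzsp (ones i).
Definition zstar_ones_last (i : nat) (c : Z) : nat -> R := mzsp (ones i ++ c :: nil).

Lemma zstar_ones_0 i : zstar_ones (S i) 0 = 0.
Proof. reflexivity. Qed.

Lemma zstar_ones_O n : zstar_ones 0 n = 1.
Proof. reflexivity. Qed.

Lemma zstar_ones_S i n :
  zstar_ones (S i) (S n) = zstar_ones (S i) n + / INR (S n) * zstar_ones i (S n).
Proof. unfold zstar_ones; simpl mzsp at 1; rewrite mzs_term_1; reflexivity. Qed.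

Lemma zstar_ones_last_0 i c : zstar_ones_last i c 0 = 0.
Proof. destruct i; reflexivity. Qed.

Lemma zstar_ones_last_O c n :
  zstar_ones_last 0 c (S n) = zstar_ones_last 0 c n + mzs_term c (S n).
Proof. unfold zstar_ones_last; simpl; lra. Qed.

Lemma zstar_ones_last_S i c n :
  zstar_ones_last (S i) c (S n) = zstar_ones_last (S i) c n + / INR (S n) * zstar_ones_last i c (S n).
Proof. unfold zstar_ones_last; simpl mzsp at 1; rewrite mzs_term_1; reflexivity. Qed.

Lemma zstar_ones_last_1 i : zstar_ones_last i 1%Z = zstar_ones (S i).
Proof. unfold zstar_ones_last, zstar_ones; rewrite ones_S; reflexivity. Qed.

(* [wallis n = (2n)!!/(2n-1)!!], of order [sqrt n]: the one-step ratio
   [(2n+2)/(2n+1) = 1 + 1/(2n+1)] is what makes [2^i * wallis n] an inductive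
   bound for [zstar_ones i n], while [wallis n / n^2] stays summable. *)
Fixpoint wallis (n : nat) : R :=
  match n with
  | O => 1
  | S k => wallis k * (2 * INR k + 2) / (2 * INR k + 1)
  end.

Lemma wallis_ge1 n : 1 <= wallis n.
Proof.
  induction n; simpl; [lra |].
  assert (0 <= INR n) by apply pos_INR.
  apply Rmult_le_reg_r with (2 * INR n + 1); [lra |].
  unfold Rdiv. rewrite Rmult_assoc, Rinv_l by lra. nra.
Qed.

Lemma zstar_ones_wallis_bound i n : 0 <= zstar_ones i n <= 2 ^ i * wallis n.
Proof.
  revert n; induction i as [|i IHi]; intros n.
  - rewrite zstar_ones_O; simpl. pose proof (wallis_ge1 n); lra.
  - induction n as [|n IHn].
    + rewrite zstar_ones_0. assert (0 < 2 ^ S i) by (apply pow_lt; lra). simpl wallis; lra.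
    + rewrite zstar_ones_S. specialize (IHi (S n)).
      assert (0 <= INR n) by apply pos_INR.
      rewrite S_INR in *.
      assert (0 < / (INR n + 1)) by (apply Rinv_0_lt_compat; lra).
      split; [apply Rplus_le_le_0_compat; [lra | apply Rmult_le_pos; lra] |].
      simpl wallis in *.
      set (p := wallis n) in *. set (q := 2 ^ i) in *.
      assert (0 < q) by (apply pow_lt; lra).
      assert (/ (INR n + 1) * zstar_ones i (S n)
              <= / (INR n + 1) * (q * (p * (2 * INR n + 2) / (2 * INR n + 1))))
        by (apply Rmult_le_compat_l; lra).
      apply Rle_trans with
        (2 ^ S i * p + / (INR n + 1) * (q * (p * (2 * INR n + 2) / (2 * INR n + 1)))); [lra |].
      right. simpl. unfold q. field. lra.
Qed.

Lemma Rabs_mzs_term_sign c n :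
  (c = 1 \/ c = -1)%Z -> Rabs (mzs_term c n) = / INR n.
Proof.
  assert (0 <= / INR n).
  { destruct n; [simpl; rewrite Rinv_0; lra | apply Rlt_le, Rinv_0_lt_compat, lt_0_INR; lia]. }
  intros [-> | ->]; [rewrite mzs_term_1 | rewrite mzs_term_m1]; unfold Rdiv;
    rewrite ?Rabs_mult, <- ?RPow_abs, ?Rabs_m1, ?pow1, ?Rmult_1_l; apply Rabs_pos_eq; assumption.
Qed.

Lemma Rabs_zstar_ones_last_le i c n :
  (c = 1 \/ c = -1)%Z -> Rabs (zstar_ones_last i c n) <= zstar_ones (S i) n.
Proof.
  intros Hc. revert n; induction i as [|i IHi]; (induction n as [|n IHn];
    [rewrite zstar_ones_last_0, zstar_ones_0, Rabs_R0; lra |]).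
  - rewrite zstar_ones_last_O, zstar_ones_S, zstar_ones_O, Rmult_1_r.
    eapply Rle_trans; [apply Rabs_triang |].
    rewrite Rabs_mzs_term_sign by exact Hc. lra.
  - rewrite zstar_ones_last_S, zstar_ones_S.
    eapply Rle_trans; [apply Rabs_triang |].
    apply Rplus_le_compat; [exact IHn |].
    assert (0 < / INR (S n)) by (apply Rinv_0_lt_compat, lt_0_INR; lia).
    rewrite Rabs_mult, Rabs_pos_eq by lra.
    apply Rmult_le_compat_l; [lra | apply IHi].
Qed.

Lemma sumR_wallis_le N :
  (1 <= N)%nat -> sumR (fun n => wallis n / INR n ^ 2) N + 2 * wallis N / INR N <= 6.
Proof.
  induction N as [|N IHN]; intros HN; [lia |].
  destruct N as [|N]; [simpl; lra |].
  specialize (IHN ltac:(lia)).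
  change (sumR (fun n => wallis n / INR n ^ 2) (S (S N))) with
    (sumR (fun n => wallis n / INR n ^ 2) (S N) + wallis (S (S N)) / INR (S (S N)) ^ 2).
  change (wallis (S (S N))) with (wallis (S N) * (2 * INR (S N) + 2) / (2 * INR (S N) + 1)).
  assert (1 <= wallis (S N)) by apply wallis_ge1.
  assert (1 <= INR (S N)) by (apply (le_INR 1); lia).
  rewrite (S_INR (S N)).
  set (p := wallis (S N)) in *. set (x := INR (S N)) in *.
  assert (p * (2 * x + 2) / (2 * x + 1) / (x + 1) ^ 2
          + 2 * (p * (2 * x + 2) / (2 * x + 1)) / (x + 1) - 2 * p / x
          = - 2 * p / (x * (x + 1) * (2 * x + 1))) by (field; lra).
  assert (0 < / (x * (x + 1) * (2 * x + 1))) by (apply Rinv_0_lt_compat; nra).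
  unfold Rdiv in *. nra.
Qed.

Lemma ex_finite_lim_sumR_wallis (a : nat -> R) C :
  (forall n, (1 <= n)%nat -> Rabs (a n) <= C * (wallis n / INR n ^ 2)) ->
  ex_finite_lim_seq (sumR a).
Proof.
  intros Ha.
  assert (Hterm : forall n, 0 <= wallis (S n) / INR (S n) ^ 2).
  { intros n. pose proof (wallis_ge1 (S n)).
    apply Rmult_le_pos; [lra | apply Rlt_le, Rinv_0_lt_compat, pow_lt, lt_0_INR; lia]. }
  assert (HC : 0 <= C).
  { specialize (Ha 1%nat (le_n 1)). pose proof (Rabs_pos (a 1%nat)). simpl in Ha. lra. }
  assert (Hmaj : ex_series (fun k => C * (wallis (S k) / INR (S k) ^ 2))).
  { cut (ex_series (fun k => wallis (S k) / INR (S k) ^ 2)).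
    { intros [l Hl]. exists (C * l). exact (is_series_scal_l C _ l Hl). }
    destruct (ex_finite_lim_seq_incr (sum_n (fun k => wallis (S k) / INR (S k) ^ 2)) 6) as [l Hl].
    - intros n. rewrite sum_Sn. pose proof (Hterm (S n)).
      change (plus ?x ?y) with (x + y). lra.
    - intros n. rewrite <- (sumR_sum_n (fun k => wallis k / INR k ^ 2)).
      pose proof (sumR_wallis_le (S n) ltac:(lia)).
      assert (0 <= 2 * wallis (S n) / INR (S n)).
      { pose proof (wallis_ge1 (S n)).
        apply Rmult_le_pos; [lra | apply Rlt_le, Rinv_0_lt_compat, lt_0_INR; lia]. }
      lra.
    - exists l; exact Hl. }
  destruct (ex_series_le (K := R_AbsRing) (V := R_CompleteNormedModule) (fun k => a (S k)) _
              (fun n => Ha (S n) ltac:(lia)) Hmaj) as [l Hl].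
  exists l. apply is_lim_seq_incr_1.
  apply (is_lim_seq_ext (sum_n (fun k => a (S k)))); [intros n; symmetry; apply sumR_sum_n | exact Hl].
Qed.

Lemma mzs_unique (l : list Z) (x : R) : is_lim_seq (mzsp l) x -> mzs l = x.
Proof. intros Hx. unfold mzs. rewrite (is_lim_seq_unique (fun N => mzsp l N) _ Hx). reflexivity. Qed.

Lemma is_lim_seq_mzs (l : list Z) :
  ex_finite_lim_seq (mzsp l) -> is_lim_seq (mzsp l) (mzs l).
Proof. intros [x Hx]. rewrite (mzs_unique l x Hx). exact Hx. Qed.

Lemma is_lim_seq_zstar_2_ones_last i c :
  (c = 1 \/ c = -1)%Z ->
  is_lim_seq (mzsp (2%Z :: ones i ++ c :: nil)) (mzs (2%Z :: ones i ++ c :: nil)).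
Proof.
  intros Hc. apply is_lim_seq_mzs.
  destruct (ex_finite_lim_sumR_wallis (fun n => / INR n ^ 2 * zstar_ones_last i c n) (2 ^ S i))
    as [x Hx].
  - intros n Hn.
    assert (0 < / INR n ^ 2) by (apply Rinv_0_lt_compat, pow_lt, lt_0_INR; lia).
    rewrite Rabs_mult, (Rabs_pos_eq (/ _)) by lra.
    pose proof (Rabs_zstar_ones_last_le i c n Hc). pose proof (zstar_ones_wallis_bound (S i) n).
    unfold Rdiv. nra.
  - exists x. eapply is_lim_seq_ext; [| exact Hx]. intros N; symmetry; apply mzsp_2.
Qed.

Lemma is_lim_seq_sumR_of_wallis (a : nat -> R) C :
  (forall n, (1 <= n)%nat -> Rabs (a n) <= C * (wallis n / INR n ^ 2)) ->
  is_lim_seq (sumR a) (Series (fun k => a (S k))).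
Proof.
  intros Ha. destruct (ex_finite_lim_sumR_wallis a C Ha) as [l Hl].
  rewrite (is_lim_seq_sumR_series a l Hl). exact Hl.
Qed.

Lemma inv_sq_le_wallis n : (1 <= n)%nat -> / INR n ^ 2 <= 1 * (wallis n / INR n ^ 2).
Proof.
  intros Hn. assert (0 < / INR n ^ 2) by (apply Rinv_0_lt_compat, pow_lt, lt_0_INR; lia).
  pose proof (wallis_ge1 n). unfold Rdiv. nra.
Qed.

Lemma is_lim_seq_zeta e : (2 <= e)%nat -> is_lim_seq (sumR (fun n => 1 / INR n ^ e)) (zetaR e).
Proof.
  intros He. apply (is_lim_seq_sumR_of_wallis (fun n => 1 / INR n ^ e) 1).
  intros n Hn. assert (1 <= INR n) by (apply (le_INR 1); lia).
  assert (0 < INR n ^ 2) by (apply pow_lt; lra).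
  assert (INR n ^ 2 <= INR n ^ e) by (apply Rle_pow; lia || lra).
  rewrite Rabs_pos_eq by (apply Rlt_le, Rdiv_lt_0_compat, pow_lt; lra).
  eapply Rle_trans; [| apply inv_sq_le_wallis, Hn].
  unfold Rdiv. rewrite Rmult_1_l. apply Rinv_le_contravar; lra.
Qed.

Lemma is_lim_seq_Li_half e :
  (1 <= e)%nat -> is_lim_seq (sumR (fun n => (1 / 2) ^ n / INR n ^ e)) (Li e (1 / 2)).
Proof.
  intros He. apply (is_lim_seq_sumR_of_wallis (fun n => (1 / 2) ^ n / INR n ^ e) 1).
  intros n Hn. assert (1 <= INR n) by (apply (le_INR 1); lia).
  assert (Hpow : INR n <= 2 ^ n).
  { clear. induction n; [simpl; lra |].
    rewrite S_INR; simpl. pose proof (pow_R1_Rle 2 n ltac:(lra)). lra. }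
  assert (Hden : INR n ^ 2 <= 2 ^ n * INR n ^ e).
  { replace (INR n ^ 2) with (INR n * INR n ^ 1) by ring.
    apply Rmult_le_compat; [lra | apply pow_le; lra | lra |].
    apply Rle_pow; [lra | lia]. }
  assert (0 < INR n ^ 2) by (apply pow_lt; lra).
  replace ((1 / 2) ^ n / INR n ^ e) with (/ (2 ^ n * INR n ^ e))
    by (rewrite Rinv_mult; unfold Rdiv; rewrite Rmult_1_l, pow_inv; reflexivity).
  rewrite Rabs_pos_eq by (apply Rlt_le, Rinv_0_lt_compat; lra).
  eapply Rle_trans; [| apply inv_sq_le_wallis, Hn].
  apply Rinv_le_contravar; lra.
Qed.

Definition alt_sq_sum (N : nat) : R := sumR (fun n => / INR n ^ 2 * ((-1) ^ n - 1)) N.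

Lemma alt_sq_sum_double M :
  alt_sq_sum (2 * M)
  = -2 * sumR (fun n => 1 / INR n ^ 2) (2 * M) + / 2 * sumR (fun n => 1 / INR n ^ 2) M.
Proof.
  unfold alt_sq_sum. rewrite !sumR_even_odd, <- sumR_plus.
  transitivity (sumR (fun k => -2 * (1 / INR (2 * k) ^ 2 + 1 / INR (2 * k - 1) ^ 2)
                               + / 2 * (1 / INR k ^ 2)) M).
  2: { rewrite sumR_plus, !sumR_scal_l, sumR_plus. ring. }
  apply sumR_ext. intros k Hk.
  rewrite pow_1_even. replace (2 * k - 1)%nat with (S (2 * (k - 1))) by lia.
  rewrite pow_1_odd. replace (S (2 * (k - 1))) with (2 * k - 1)%nat by lia.
  rewrite mult_INR. change (INR 2) with 2.
  assert (0 < INR k) by (apply lt_0_INR; lia).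
  assert (INR (2 * k - 1) <> 0) by (apply not_0_INR; lia).
  field. lra.
Qed.

Lemma is_lim_seq_alt_sq_sum : is_lim_seq alt_sq_sum (- (3 / 2) * zetaR 2).
Proof.
  assert (Hdouble : forall u l, is_lim_seq u l -> is_lim_seq (fun M => u (2 * M)%nat) l).
  { intros u l Hu. apply (is_lim_seq_subseq u l (fun M => (2 * M)%nat)); [| exact Hu].
    intros P [N HN]. exists N. intros n Hn. apply HN. lia. }
  assert (Hlim : is_lim_seq alt_sq_sum (Series (fun k => / INR (S k) ^ 2 * ((-1) ^ S k - 1)))).
  { apply (is_lim_seq_sumR_of_wallis (fun n => / INR n ^ 2 * ((-1) ^ n - 1)) 2). intros n Hn.
    assert (0 < / INR n ^ 2) by (apply Rinv_0_lt_compat, pow_lt, lt_0_INR; lia).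
    assert (Rabs ((-1) ^ n - 1) <= 2).
    { eapply Rle_trans; [apply Rabs_triang |].
      rewrite Rabs_Ropp, Rabs_R1, <- RPow_abs, Rabs_m1, pow1. lra. }
    pose proof (wallis_ge1 n).
    rewrite Rabs_mult, (Rabs_pos_eq (/ _)) by lra. unfold Rdiv.
    rewrite Rmult_comm, <- Rmult_assoc. apply Rmult_le_compat_r; [lra |].
    apply Rle_trans with 2; [assumption | lra]. }
  assert (Heven : is_lim_seq (fun M => alt_sq_sum (2 * M)) (- (3 / 2) * zetaR 2)).
  { eapply is_lim_seq_ext; [intros M; symmetry; apply alt_sq_sum_double |].
    replace (- (3 / 2) * zetaR 2) with (-2 * zetaR 2 + / 2 * zetaR 2) by field.
    apply is_lim_seq_plus'; apply (is_lim_seq_scal_l _ _ (Finite (zetaR 2))).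
    + apply Hdouble, is_lim_seq_zeta; lia.
    + apply is_lim_seq_zeta; lia. }
  pose proof (is_lim_seq_unique _ _ (Hdouble _ _ Hlim)) as Hl.
  rewrite (is_lim_seq_unique _ _ Heven) in Hl. injection Hl as ->. exact Hlim.
Qed.

(** * Integrals over [0, ln 2] *)

(* Coquelicot states these in a normed module, with [plus], [minus] and [scal] in the value. *)
Lemma is_RInt_plus_R (f g : R -> R) a b (If Ig : R) :
  is_RInt f a b If -> is_RInt g a b Ig -> is_RInt (fun x => f x + g x) a b (If + Ig).
Proof. exact (is_RInt_plus f g a b If Ig). Qed.

Lemma is_RInt_minus_R (f g : R -> R) a b (If Ig : R) :
  is_RInt f a b If -> is_RInt g a b Ig -> is_RInt (fun x => f x - g x) a b (If - Ig).
Proof. exact (is_RInt_minus f g a b If Ig). Qed.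

Lemma is_RInt_scal_R (f : R -> R) a b k (If : R) :
  is_RInt f a b If -> is_RInt (fun x => k * f x) a b (k * If).
Proof. exact (is_RInt_scal f a b k If). Qed.

Lemma is_RInt_ext_le (f g : R -> R) a b (I : R) :
  a <= b -> (forall x, a <= x <= b -> f x = g x) -> is_RInt f a b I -> is_RInt g a b I.
Proof.
  intros Hab Hfg HI. apply is_RInt_ext with f; [| exact HI].
  intros x Hx. rewrite Rmin_left, Rmax_right in Hx by lra. apply Hfg; lra.
Qed.

Lemma is_RInt_derive_le (f df : R -> R) a b :
  a <= b -> (forall x, a <= x <= b -> is_derive f x (df x)) ->
  (forall x, a <= x <= b -> continuous df x) -> is_RInt df a b (f b - f a).
Proof.
  intros Hab Hd Hc. apply (is_RInt_derive f df a b);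
    intros x Hx; rewrite Rmin_left, Rmax_right in Hx by lra; auto.
Qed.

Lemma is_RInt_RInt_continuous_le (f : R -> R) a b :
  a <= b -> (forall x, a <= x <= b -> continuous f x) -> is_RInt f a b (RInt f a b).
Proof.
  intros Hab Hc. apply (RInt_correct (V := R_CompleteNormedModule)).
  apply (ex_RInt_continuous (V := R_CompleteNormedModule)).
  intros x Hx; rewrite Rmin_left, Rmax_right in Hx by lra; auto.
Qed.

Lemma ln2_pos : 0 < ln 2.
Proof. rewrite <- ln_1. apply ln_increasing; lra. Qed.

Lemma ln2_ge0 : 0 <= ln 2.
Proof. apply Rlt_le, ln2_pos. Qed.

Lemma ln2_lt_1 : ln 2 < 1.
Proof.
  rewrite <- (ln_exp 1). apply ln_increasing; [lra |].
  pose proof (exp_ineq1 1); lra.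
Qed.

Lemma exp_le x y : x <= y -> exp x <= exp y.
Proof. intros [Hxy | ->]; [left; apply exp_increasing, Hxy | right; reflexivity]. Qed.

Ltac continuity_by_derive :=
  intros; apply (ex_derive_continuous (K := R_AbsRing) (V := R_NormedModule)); auto_derive; auto.

(* [auto_derive] unfolds [INR (S n)] into the body of [INR]; fold it back. *)
Ltac fold_INR :=
  repeat match goal with |- context [match ?n with 0%nat => 1 | S _ => INR ?n + 1 end] =>
    change (match n with 0%nat => 1 | S _ => INR n + 1 end) with (INR (S n)) end;
  change RinvImpl.Rinv with Rinv;
  repeat match goal with |- context [?a + - ?b] => change (a + - b) with (a - b) end.

Definition W (s : R) : R := 1 - exp s.

Definition IW (m n : nat) : R := RInt (fun s => s ^ m * W s ^ n) 0 (ln 2).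

Lemma IW_correct m n : is_RInt (fun s => s ^ m * W s ^ n) 0 (ln 2) (IW m n).
Proof. apply is_RInt_RInt_continuous_le; [exact ln2_ge0 | unfold W; continuity_by_derive]. Qed.

Lemma W_ln2 : W (ln 2) = -1.
Proof. unfold W. rewrite exp_ln; lra. Qed.

Lemma W_0 : W 0 = 0.
Proof. unfold W. rewrite exp_0; ring. Qed.

Lemma IW_0_S n : IW 0 (S n) - IW 0 n = (-1) ^ S n / INR (S n).
Proof.
  assert (Hn : INR (S n) <> 0) by (apply not_0_INR; lia).
  assert (Hd : forall x, 0 <= x <= ln 2 ->
    is_derive (fun s => W s ^ S n / INR (S n)) x (x ^ 0 * W x ^ S n - x ^ 0 * W x ^ n)).
  { intros x Hx. unfold W. auto_derive; auto. fold_INR. simpl pow. field. exact Hn. }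
  assert (HI := is_RInt_derive_le _ _ 0 (ln 2) ln2_ge0 Hd ltac:(unfold W; continuity_by_derive)).
  rewrite <- (is_RInt_unique _ _ _ _
                (is_RInt_minus_R _ _ _ _ _ _ (IW_correct 0 (S n)) (IW_correct 0 n))).
  rewrite (is_RInt_unique _ _ _ _ HI), W_ln2, W_0, pow_i by lia. field. exact Hn.
Qed.

Lemma IW_S_S m n : IW (S m) (S n) - IW (S m) n =
  / INR (S n) * ((-1) ^ S n * ln 2 ^ S m - INR (S m) * IW m (S n)).
Proof.
  assert (Hn : INR (S n) <> 0) by (apply not_0_INR; lia).
  set (F x := (x ^ S m * W x ^ S n - x ^ S m * W x ^ n)
              + / INR (S n) * INR (S m) * (x ^ m * W x ^ S n)).
  assert (Hd : forall x, 0 <= x <= ln 2 ->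
    is_derive (fun s => / INR (S n) * (s ^ S m * W s ^ S n)) x (F x)).
  { intros x Hx. unfold F, W. auto_derive; auto. fold_INR. simpl pow. field. exact Hn. }
  assert (HI := is_RInt_derive_le _ _ 0 (ln 2) ln2_ge0 Hd
                  ltac:(unfold F, W; continuity_by_derive)).
  assert (HI' := is_RInt_minus_R _ _ _ _ _ _ HI
                  (is_RInt_scal_R _ _ _ (/ INR (S n) * INR (S m)) _ (IW_correct m (S n)))).
  rewrite <- (is_RInt_unique _ _ _ _
                (is_RInt_minus_R _ _ _ _ _ _ (IW_correct (S m) (S n)) (IW_correct (S m) n))).
  assert (HI'' : is_RInt (fun s => s ^ S m * W s ^ S n - s ^ S m * W s ^ n) 0 (ln 2)
    (/ INR (S n) * (ln 2 ^ S m * W (ln 2) ^ S n) - / INR (S n) * (0 ^ S m * W 0 ^ S n)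
     - / INR (S n) * INR (S m) * IW m (S n))).
  { refine (is_RInt_ext_le _ _ _ _ _ ln2_ge0 _ HI'). intros x _. unfold F. ring. }
  rewrite (is_RInt_unique _ _ _ _ HI''), W_ln2, W_0, !pow_i by lia. field. exact Hn.
Qed.

Lemma IW_n_0 m : IW m 0 = ln 2 ^ S m / INR (S m).
Proof.
  assert (Hd : forall x, 0 <= x <= ln 2 ->
    is_derive (fun s => s ^ S m / INR (S m)) x (x ^ m * W x ^ 0)).
  { intros x Hx. auto_derive; auto. fold_INR. rewrite pow_O. field. apply not_0_INR; lia. }
  rewrite <- (is_RInt_unique _ _ _ _ (IW_correct m 0)).
  rewrite (is_RInt_unique _ _ _ _
             (is_RInt_derive_le _ _ 0 (ln 2) ln2_ge0 Hd ltac:(unfold W; continuity_by_derive))).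
  rewrite pow_i by lia. unfold Rdiv; ring.
Qed.

(** * Expansion of the truncated star sums *)

Definition Phi (m n : nat) : R := (-1) ^ m / INR (fact m) * (IW m n - IW m 0).

Definition lncoef (r : nat) : R := (- ln 2) ^ r / INR (fact r).

Definition zstar_ones_diff (i n : nat) : R := zstar_ones_last i (-1) n - zstar_ones_last i 1 n.

Lemma Phi_0 m : Phi m 0 = 0.
Proof. unfold Phi; ring. Qed.

Lemma Phi_O_S n : Phi 0 (S n) = Phi 0 n + (-1) ^ S n / INR (S n).
Proof.
  unfold Phi. pose proof (IW_0_S n). simpl fact. rewrite pow_O. change (INR 1) with 1.
  unfold Rdiv in *. rewrite Rinv_1. lra.
Qed.

Lemma Phi_S_S m n : Phi (S m) (S n) =
  Phi (S m) n + / INR (S n) * (Phi m (S n) + lncoef (S m) * ((-1) ^ S n - 1)).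
Proof.
  unfold Phi, lncoef.
  replace (IW (S m) (S n)) with
    (IW (S m) n + / INR (S n) * ((-1) ^ S n * ln 2 ^ S m - INR (S m) * IW m (S n)))
    by (pose proof (IW_S_S m n); lra).
  rewrite !IW_n_0, fact_simpl, mult_INR.
  replace (- ln 2) with (-1 * ln 2) by ring. rewrite Rpow_mult_distr.
  assert (INR (fact m) <> 0) by apply INR_fact_neq_0.
  assert (INR (S n) <> 0) by (apply not_0_INR; lia).
  assert (INR (S m) <> 0) by (apply not_0_INR; lia).
  simpl pow. field. repeat split; auto; apply not_0_INR; lia.
Qed.

Lemma zstar_ones_diff_0 i : zstar_ones_diff i 0 = 0.
Proof. unfold zstar_ones_diff. rewrite !zstar_ones_last_0. ring. Qed.

Lemma zstar_ones_diff_O_S n :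
  zstar_ones_diff 0 (S n) = zstar_ones_diff 0 n + ((-1) ^ S n - 1) / INR (S n).
Proof.
  unfold zstar_ones_diff. rewrite !zstar_ones_last_O, mzs_term_1, mzs_term_m1.
  unfold Rdiv. ring.
Qed.

Lemma zstar_ones_diff_S_S i n :
  zstar_ones_diff (S i) (S n) = zstar_ones_diff (S i) n + / INR (S n) * zstar_ones_diff i (S n).
Proof. unfold zstar_ones_diff. rewrite !zstar_ones_last_S. ring. Qed.

Lemma lncoef_0 : lncoef 0 = 1.
Proof. unfold lncoef. simpl. field. Qed.

(* Both sides satisfy the recursion of [Phi_S_S] in [n] and vanish at [n = 0]. *)
Lemma Phi_expand m n :
  Phi m n = sum_f_R0 (fun r => lncoef r * zstar_ones_diff (m - r) n) m + zstar_ones (S m) n.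
Proof.
  revert n; induction m as [|m IHm]; (induction n as [|n IHn];
    [rewrite Phi_0, zstar_ones_0, (sum_eq _ (fun _ => 0)), sum_cte;
       [ring | intros; rewrite zstar_ones_diff_0; ring] |]).
  - rewrite Phi_O_S, IHn. simpl sum_f_R0.
    rewrite lncoef_0, zstar_ones_diff_O_S, zstar_ones_S, zstar_ones_O.
    unfold Rdiv. ring.
  - rewrite Phi_S_S, IHn, IHm, (zstar_ones_S (S m) n), !tech5, Nat.sub_diag.
    rewrite zstar_ones_diff_O_S.
    rewrite (sum_eq (fun r => lncoef r * zstar_ones_diff (S m - r) (S n))
      (fun r => lncoef r * zstar_ones_diff (S m - r) n
                + lncoef r * zstar_ones_diff (m - r) (S n) * / INR (S n))).
    + rewrite plus_sum, <- scal_sum. unfold Rdiv. ring.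
    + intros r Hr. replace (S m - r)%nat with (S (m - r)) by lia.
      rewrite zstar_ones_diff_S_S. ring.
Qed.

(** * The limit of the weighted sums *)

Definition IE (p k : nat) : R := RInt (fun s => s ^ p * exp (- INR k * s)) 0 (ln 2).

Lemma IE_correct p k : is_RInt (fun s => s ^ p * exp (- INR k * s)) 0 (ln 2) (IE p k).
Proof. apply is_RInt_RInt_continuous_le; [exact ln2_ge0 | continuity_by_derive]. Qed.

Lemma exp_opp_INR_ln2 k : exp (- INR k * ln 2) = (1 / 2) ^ k.
Proof.
  induction k as [|k IHk]; [simpl; rewrite Ropp_0, Rmult_0_l, exp_0; reflexivity |].
  replace (- INR (S k) * ln 2) with (- INR k * ln 2 + - ln 2) by (rewrite S_INR; ring).
  rewrite exp_plus, IHk, exp_Ropp, exp_ln by lra. simpl; field.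
Qed.

Lemma IE_p_0 p : IE p 0 = ln 2 ^ S p / INR (S p).
Proof.
  rewrite <- IW_n_0. apply RInt_ext. intros x _.
  simpl; rewrite Ropp_0, Rmult_0_l, exp_0; ring.
Qed.

Lemma IE_0 k : (1 <= k)%nat -> IE 0 k = (1 - exp (- INR k * ln 2)) / INR k.
Proof.
  intros Hk. assert (0 < INR k) by (apply lt_0_INR; lia).
  assert (Hd : forall x, 0 <= x <= ln 2 ->
    is_derive (fun s => - exp (- INR k * s) / INR k) x (x ^ 0 * exp (- INR k * x))).
  { intros x Hx. auto_derive; auto. fold_INR. simpl pow. field. lra. }
  rewrite <- (is_RInt_unique _ _ _ _ (IE_correct 0 k)).
  rewrite (is_RInt_unique _ _ _ _
    (is_RInt_derive_le _ _ 0 (ln 2) ln2_ge0 Hd ltac:(continuity_by_derive))).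
  rewrite Rmult_0_r, exp_0. field. lra.
Qed.

Lemma IE_S p k : (1 <= k)%nat ->
  IE (S p) k = (INR (S p) * IE p k - ln 2 ^ S p * exp (- INR k * ln 2)) / INR k.
Proof.
  intros Hk. assert (0 < INR k) by (apply lt_0_INR; lia).
  set (F x := x ^ S p * exp (- INR k * x) - INR (S p) / INR k * (x ^ p * exp (- INR k * x))).
  assert (Hd : forall x, 0 <= x <= ln 2 ->
    is_derive (fun s => - s ^ S p * exp (- INR k * s) / INR k) x (F x)).
  { intros x Hx. unfold F. auto_derive; auto. fold_INR. simpl pow. field. lra. }
  assert (HI := is_RInt_plus_R _ _ _ _ _ _
    (is_RInt_derive_le _ _ 0 (ln 2) ln2_ge0 Hd ltac:(unfold F; continuity_by_derive))
    (is_RInt_scal_R _ _ _ (INR (S p) / INR k) _ (IE_correct p k))).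
  assert (HI' : is_RInt (fun s => s ^ S p * exp (- INR k * s)) 0 (ln 2)
    ((- ln 2 ^ S p * exp (- INR k * ln 2) / INR k - - 0 ^ S p * exp (- INR k * 0) / INR k)
     + INR (S p) / INR k * IE p k)).
  { refine (is_RInt_ext_le _ _ _ _ _ ln2_ge0 _ HI). intros x _. unfold F. ring. }
  rewrite <- (is_RInt_unique _ _ _ _ (IE_correct (S p) k)), (is_RInt_unique _ _ _ _ HI'), pow_i by lia.
  field. lra.
Qed.

Definition IE_closed_form (p k : nat) : R :=
  INR (fact p) / INR k ^ S p
  - exp (- INR k * ln 2)
    * sum_f_R0 (fun j => INR (fact p) / INR (fact j) * ln 2 ^ j / INR k ^ (S p - j)) p.

Lemma IE_closed p k : (1 <= k)%nat -> IE p k = IE_closed_form p k.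
Proof.
  intros Hk. assert (0 < INR k) by (apply lt_0_INR; lia).
  induction p as [|p IHp]; [rewrite IE_0 by exact Hk; unfold IE_closed_form; simpl; field; lra |].
  rewrite IE_S, IHp by exact Hk. unfold IE_closed_form. rewrite tech5.
  rewrite (sum_eq (fun j => INR (fact (S p)) / INR (fact j) * ln 2 ^ j / INR k ^ (S (S p) - j))
                  (fun j => INR (fact p) / INR (fact j) * ln 2 ^ j / INR k ^ (S p - j)
                            * (INR (S p) / INR k))).
  - rewrite <- scal_sum. replace (S (S p) - S p)%nat with 1%nat by lia.
    rewrite fact_simpl, mult_INR.
    assert (INR (fact p) <> 0) by apply INR_fact_neq_0.
    assert (INR (S p) <> 0) by (apply not_0_INR; lia).
    simpl pow. field. repeat split; try lra; auto; apply pow_nonzero; lra.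
  - intros j Hj. replace (S (S p) - j)%nat with (S (S p - j)) by lia.
    rewrite fact_simpl, mult_INR. simpl pow.
    assert (INR (fact j) <> 0) by apply INR_fact_neq_0.
    assert (INR k ^ (S p - j) <> 0) by (apply pow_nonzero; lra).
    field. repeat split; try lra; auto.
Qed.

Lemma is_lim_seq_sumR_IE p : (1 <= p)%nat ->
  is_lim_seq (sumR (IE p))
    (INR (fact p) * zetaR (S p)
     - sum_f_R0 (fun j => INR (fact p) / INR (fact j) * ln 2 ^ j * Li (S p - j) (1 / 2)) p).
Proof.
  intros Hp.
  apply (is_lim_seq_ext (fun N => INR (fact p) * sumR (fun k => 1 / INR k ^ S p) N -
      sum_f_R0 (fun j => INR (fact p) / INR (fact j) * ln 2 ^ j
                         * sumR (fun k => (1 / 2) ^ k / INR k ^ (S p - j)) N) p)).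
  - intros N. rewrite (sumR_ext (IE p) (IE_closed_form p)) by (intros; apply IE_closed; lia).
    unfold IE_closed_form. rewrite sumR_minus, <- sumR_scal_l. f_equal.
    + apply sumR_ext. intros; unfold Rdiv; ring.
    + rewrite (sum_eq _ (fun j => sumR (fun k => INR (fact p) / INR (fact j) * ln 2 ^ j
                                                 * ((1 / 2) ^ k / INR k ^ (S p - j))) N))
        by (intros; rewrite sumR_scal_l; reflexivity).
      rewrite sum_f_R0_sumR_swap. apply sumR_ext. intros k _.
      rewrite exp_opp_INR_ln2, scal_sum. apply sum_eq. intros. unfold Rdiv. ring.
  - apply is_lim_seq_minus'.
    + apply (is_lim_seq_scal_l _ _ (Finite _)). apply is_lim_seq_zeta. lia.
    + apply is_lim_seq_sum_f_R0. intros r Hr.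
      apply (is_lim_seq_scal_l _ _ (Finite _)). apply is_lim_seq_Li_half. lia.
Qed.

Lemma is_derive_sumR (f : nat -> R -> R) (df : nat -> R) N x :
  (forall n, (1 <= n <= N)%nat -> is_derive (f n) x (df n)) ->
  is_derive (fun s => sumR (fun n => f n s) N) x (sumR df N).
Proof.
  induction N as [|N IHN]; intros Hf; simpl.
  - apply (is_derive_const (K := R_AbsRing) (V := R_NormedModule)).
  - apply (is_derive_plus (K := R_AbsRing) (V := R_NormedModule));
      [apply IHN; intros | ]; apply Hf; lia.
Qed.

Lemma ex_derive_sumR (f : nat -> R -> R) N x :
  (forall n, (1 <= n <= N)%nat -> ex_derive (f n) x) ->
  ex_derive (fun s => sumR (fun n => f n s) N) x.
Proof.
  intros Hf. exists (sumR (fun n => Derive (f n) x) N). apply is_derive_sumR.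
  intros n Hn. apply Derive_correct, Hf, Hn.
Qed.

Lemma continuous_of_ex_derive (f : R -> R) x : ex_derive f x -> continuous f x.
Proof. apply (ex_derive_continuous (K := R_AbsRing) (V := R_NormedModule)). Qed.

Definition Gsum (N : nat) (s : R) : R := sumR (fun n => / INR n ^ 2 * (W s ^ n - 1)) N.
Definition Psum (N : nat) (s : R) : R := sumR (fun n => W s ^ (n - 1) / INR n) N.

Lemma is_derive_Gsum N x : is_derive (Gsum N) x (- exp x * Psum N x).
Proof.
  unfold Gsum, Psum. rewrite <- sumR_scal_l. apply is_derive_sumR.
  intros [|k] Hk; [lia |].
  unfold W. auto_derive; auto. fold_INR. simpl pow. rewrite ?Nat.sub_0_r.
  field. apply not_0_INR; lia.
Qed.

Lemma ex_derive_Gsum N x : ex_derive (Gsum N) x.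
Proof. eexists; apply is_derive_Gsum. Qed.

Lemma ex_derive_Psum N x : ex_derive (Psum N) x.
Proof. apply ex_derive_sumR. intros n Hn. unfold W. auto_derive. auto. Qed.

Lemma Gsum_ln2 N : Gsum N (ln 2) = alt_sq_sum N.
Proof. unfold Gsum, alt_sq_sum. rewrite W_ln2. reflexivity. Qed.

Lemma is_RInt_pow_Gsum m N :
  is_RInt (fun s => s ^ m * Gsum N s) 0 (ln 2) (sumR (fun n => / INR n ^ 2 * (IW m n - IW m 0)) N).
Proof.
  assert (Hl := ln2_ge0).
  induction N as [|N IHN]; simpl sumR.
  - assert (H0 := is_RInt_scal_R _ _ _ 0 _ (IW_correct m 0)). rewrite Rmult_0_l in H0.
    refine (is_RInt_ext_le _ _ _ _ _ Hl _ H0).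
    intros x _. unfold Gsum; simpl; ring.
  - refine (is_RInt_ext_le _ _ _ _ _ Hl _ (is_RInt_plus_R _ _ _ _ _ _ IHN
      (is_RInt_scal_R _ _ _ (/ INR (S N) ^ 2) _
        (is_RInt_minus_R _ _ _ _ _ _ (IW_correct m (S N)) (IW_correct m 0))))).
    intros x _. unfold Gsum. cbn [sumR]. rewrite pow_O. ring.
Qed.

Lemma is_RInt_pow_exp_Psum m N :
  is_RInt (fun s => s ^ S m * exp s * Psum N s) 0 (ln 2)
    (INR (S m) * RInt (fun s => s ^ m * Gsum N s) 0 (ln 2) - ln 2 ^ S m * alt_sq_sum N).
Proof.
  assert (Hl := ln2_ge0).
  set (F x := INR (S m) * (x ^ m * Gsum N x) - x ^ S m * exp x * Psum N x).
  assert (Hd : forall x, 0 <= x <= ln 2 -> is_derive (fun s => s ^ S m * Gsum N s) x (F x)).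
  { intros x _.
    assert (Hp : is_derive (fun s => s ^ S m) x (INR (S m) * x ^ m))
      by (auto_derive; auto; fold_INR; simpl pred; ring).
    assert (H := is_derive_mult _ _ x _ _ Hp (is_derive_Gsum N x) ltac:(intros; apply Rmult_comm)).
    replace (F x) with (INR (S m) * x ^ m * Gsum N x + x ^ S m * (- exp x * Psum N x))
      by (unfold F; ring).
    exact H. }
  assert (Hc : forall x, 0 <= x <= ln 2 -> continuous F x).
  { intros x _. apply continuous_of_ex_derive. unfold F. auto_derive.
    repeat split; auto using ex_derive_Gsum, ex_derive_Psum. }
  assert (HG : is_RInt (fun s => s ^ m * Gsum N s) 0 (ln 2)
                       (RInt (fun s => s ^ m * Gsum N s) 0 (ln 2))).
  { apply is_RInt_RInt_continuous_le; [exact Hl |]. intros x _.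
    apply continuous_of_ex_derive. auto_derive. repeat split; auto using ex_derive_Gsum. }
  assert (HI := is_RInt_minus_R _ _ _ _ _ _ (is_RInt_scal_R _ _ _ (INR (S m)) _ HG)
                  (is_RInt_derive_le _ _ 0 (ln 2) Hl Hd Hc)).
  cbv beta in HI. rewrite Gsum_ln2, (pow_i (S m)), Rmult_0_l, Rminus_0_r in HI by lia.
  refine (is_RInt_ext_le _ _ _ _ _ Hl _ HI). intros x _. unfold F. ring.
Qed.

(* The remainder of the logarithmic series [sum_n W s ^ n / n = - ln (1 - W s) = - s]. *)
Definition Rsum (N : nat) (s : R) : R := s + sumR (fun n => W s ^ n / INR n) N.

Definition Esum (N : nat) (s : R) : R := sum_f_R0 (fun k => exp (- INR k * s)) N.

(* As [Psum N s -> s / (e^s - 1)], both terms tend to [s^(m+2) / (1 - e^(-s))]. *)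
Definition tail_gap (m N : nat) (s : R) : R :=
  s ^ S m * exp s * Psum N s - s ^ S (S m) * Esum N s.

Lemma exp_sub1_Psum N s : (exp s - 1) * Psum N s = s - Rsum N s.
Proof.
  assert (HW : W s * Psum N s = sumR (fun n => W s ^ n / INR n) N).
  { unfold Psum. rewrite <- sumR_scal_l. apply sumR_ext.
    intros [|n] Hn; [lia |]. simpl. rewrite Nat.sub_0_r. unfold Rdiv; ring. }
  unfold Rsum. rewrite <- HW. unfold W; ring.
Qed.

Lemma exp_sub1_Esum N s : (exp s - 1) * Esum N s = exp s - exp (- INR N * s).
Proof.
  unfold Esum. induction N as [|N IHN].
  - simpl. rewrite Ropp_0, Rmult_0_l, exp_0. ring.
  - rewrite tech5, Rmult_plus_distr_l, IHN.
    replace (- INR N * s) with (s + - INR (S N) * s) by (rewrite S_INR; ring).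
    rewrite exp_plus. ring.
Qed.

Lemma tail_gap_identity m N s :
  (exp s - 1) * tail_gap m N s = - s ^ S m * exp s * Rsum N s + s ^ S (S m) * exp (- INR N * s).
Proof.
  unfold tail_gap.
  transitivity (s ^ S m * exp s * ((exp s - 1) * Psum N s) - s ^ S (S m) * ((exp s - 1) * Esum N s));
    [ring |].
  rewrite exp_sub1_Psum, exp_sub1_Esum. simpl. ring.
Qed.

Lemma is_derive_Rsum N x : is_derive (Rsum N) x (W x ^ N).
Proof.
  assert (Hgeom : forall w, (1 - w) * sumR (fun n => w ^ (n - 1)) N = 1 - w ^ N).
  { intros w. induction N as [|N IHN]; [simpl; ring |].
    cbn [sumR]. rewrite Rmult_plus_distr_l, IHN, Nat.sub_succ, Nat.sub_0_r. simpl; ring. }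
  assert (HQ : is_derive (fun s => sumR (fun n => W s ^ n / INR n) N) x
                 (sumR (fun n => - exp x * W x ^ (n - 1)) N)).
  { apply is_derive_sumR. intros [|k] Hk; [lia |]. unfold W. auto_derive; auto. fold_INR.
    simpl pred. rewrite Nat.sub_succ, Nat.sub_0_r. field. apply not_0_INR; lia. }
  assert (H := is_derive_plus _ _ x 1 _ (is_derive_id (K := R_AbsRing) x) HQ).
  rewrite sumR_scal_l in H. replace (W x ^ N) with (1 + - exp x * sumR (fun n => W x ^ (n - 1)) N).
  - exact H.
  - specialize (Hgeom (W x)). unfold W in *. replace (1 - (1 - exp x)) with (exp x) in Hgeom by ring.
    rewrite Ropp_mult_distr_l_reverse, Hgeom. ring.
Qed.

Lemma Rsum_0 N : Rsum N 0 = 0.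
Proof.
  unfold Rsum. rewrite sumR_ext with (g := fun _ => 0), sumR_0; [ring |].
  intros n Hn. rewrite W_0, pow_i by lia. unfold Rdiv; ring.
Qed.

Lemma Rabs_Rsum_le N s : 0 <= s -> Rabs (Rsum N s) <= s * (exp s - 1) ^ N.
Proof.
  intros Hs.
  assert (HI := is_RInt_derive_le _ _ 0 s Hs (fun x _ => is_derive_Rsum N x)
                  ltac:(unfold W; continuity_by_derive)).
  rewrite Rsum_0, Rminus_0_r in HI.
  assert (Hb : forall x, Rmin 0 s <= x <= Rmax 0 s -> norm (W x ^ N) <= (exp s - 1) ^ N).
  { intros x Hx. rewrite Rmin_left, Rmax_right in Hx by lra.
    change (norm (W x ^ N)) with (Rabs (W x ^ N)). rewrite <- RPow_abs.
    apply pow_incr. split; [apply Rabs_pos |].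
    assert (1 <= exp x) by (rewrite <- exp_0; apply exp_le; lra).
    assert (exp x <= exp s) by (apply exp_le; lra).
    unfold W. rewrite Rabs_left1; lra. }
  assert (H := norm_RInt_le_const_abs (V := R_NormedModule) _ 0 s _ _ Hb HI).
  change (norm (Rsum N s)) with (Rabs (Rsum N s)) in H.
  rewrite Rminus_0_r, (Rabs_pos_eq s) in H by lra. exact H.
Qed.

(* AM-GM: [4 (e^s - 1) <= e^(2s)]. *)
Lemma exp_sub1_le s : exp s - 1 <= exp (2 * (s - ln 2)).
Proof.
  assert (H : exp (2 * (s - ln 2)) * 4 = exp s * exp s).
  { replace 4 with (exp (ln 2) * exp (ln 2)) by (rewrite exp_ln; lra).
    rewrite <- !exp_plus. f_equal. ring. }
  pose proof (pow2_ge_0 (exp s - 2)). nra.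
Qed.

Lemma mul_exp_opp_le N s : (1 <= N)%nat -> 0 < s -> s * exp (- INR N * s) <= / INR N.
Proof.
  intros HN Hs. assert (0 < INR N) by (apply lt_0_INR; lia).
  assert (H1 : 1 + INR N * s < exp (INR N * s)) by (apply exp_ineq1; nra).
  replace (- INR N * s) with (- (INR N * s)) by ring. rewrite exp_Ropp.
  assert (0 < exp (INR N * s)) by apply exp_pos.
  apply Rmult_le_reg_r with (exp (INR N * s) * INR N); [nra |].
  replace (s * / exp (INR N * s) * (exp (INR N * s) * INR N)) with (s * INR N) by (field; lra).
  replace (/ INR N * (exp (INR N * s) * INR N)) with (exp (INR N * s)) by (field; lra).
  nra.
Qed.

Lemma Rabs_tail_gap_le m N s : 0 <= s <= ln 2 ->
  Rabs (tail_gap m (S N) s) <= 2 * (exp s - 1) ^ N + / INR (S N).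
Proof.
  intros Hs. pose proof ln2_lt_1.
  assert (HN : 0 < / INR (S N)) by (apply Rinv_0_lt_compat, lt_0_INR; lia).
  destruct (Req_dec s 0) as [-> | Hs0].
  { replace (tail_gap m (S N) 0) with 0 by (unfold tail_gap; simpl; ring).
    rewrite Rabs_R0, exp_0. replace (1 - 1) with 0 by ring. destruct N; simpl pow; lra. }
  set (D := exp s - 1).
  assert (HsD : s < D) by (pose proof (exp_ineq1 s Hs0); unfold D; lra).
  assert (Ha : 0 < s ^ S m <= s).
  { simpl. assert (0 < s ^ m) by (apply pow_lt; lra).
    assert (s ^ m <= 1) by (rewrite <- (pow1 m); apply pow_incr; lra). split; nra. }
  assert (He : 0 < exp s <= 2)
    by (split; [apply exp_pos | rewrite <- (exp_ln 2) by lra; apply exp_le; lra]).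
  assert (HR := Rabs_Rsum_le (S N) s ltac:(lra)).
  assert (Hq := mul_exp_opp_le (S N) s ltac:(lia) ltac:(lra)).
  assert (HDN : 0 <= D ^ N) by (apply pow_le; lra).
  assert (Hkey : Rabs (D * tail_gap m (S N) s) <= D * (2 * D ^ N + / INR (S N))).
  { unfold D. rewrite tail_gap_identity. fold D.
    eapply Rle_trans; [apply Rabs_triang |].
    assert (0 < exp (- INR (S N) * s)) by apply exp_pos.
    replace (s ^ S (S m)) with (s ^ S m * s) by (simpl; ring).
    rewrite !Rabs_mult, Rabs_Ropp, (Rabs_pos_eq (s ^ S m)), (Rabs_pos_eq (exp s)), (Rabs_pos_eq s),
      (Rabs_pos_eq (exp _)) by lra.
    fold D in HR. replace (D ^ S N) with (D * D ^ N) in HR by reflexivity.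
    assert (s ^ S m * exp s * Rabs (Rsum (S N) s) <= D * (2 * D ^ N)).
    { apply Rle_trans with (s ^ S m * exp s * (s * (D * D ^ N))).
      { apply Rmult_le_compat_l; [apply Rmult_le_pos; lra | exact HR]. }
      assert (HP : 0 <= D * D ^ N) by (apply Rmult_le_pos; lra).
      assert (Has : 0 <= s ^ S m * s <= 1) by (split; nra).
      assert (Hase : s ^ S m * s * exp s <= 2).
      { apply Rle_trans with (1 * 2); [apply Rmult_le_compat; lra | lra]. }
      replace (s ^ S m * exp s * (s * (D * D ^ N))) with (s ^ S m * s * exp s * (D * D ^ N)) by ring.
      apply Rle_trans with (2 * (D * D ^ N)); [apply Rmult_le_compat_r; lra | lra]. }
    assert (s ^ S m * s * exp (- INR (S N) * s) <= D * / INR (S N)).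
    { rewrite Rmult_assoc. apply Rmult_le_compat; [lra | apply Rmult_le_pos; lra | lra | exact Hq]. }
    lra. }
  rewrite Rabs_mult, (Rabs_pos_eq D) in Hkey by lra.
  apply Rmult_le_reg_l with D; lra.
Qed.

Definition Aint (m N : nat) : R := RInt (fun s => s ^ S m * exp s * Psum N s) 0 (ln 2).
Definition Bint (m N : nat) : R := RInt (fun s => s ^ S (S m) * Esum N s) 0 (ln 2).

Lemma ex_derive_Esum N x : ex_derive (Esum N) x.
Proof.
  unfold Esum. induction N as [|N IHN]; simpl; [auto_derive; auto |].
  apply (ex_derive_plus (K := R_AbsRing) (V := R_NormedModule)); [exact IHN | auto_derive; auto].
Qed.

Lemma Aint_correct m N : is_RInt (fun s => s ^ S m * exp s * Psum N s) 0 (ln 2) (Aint m N).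
Proof.
  apply is_RInt_RInt_continuous_le; [exact ln2_ge0 |].
  intros x _. apply continuous_of_ex_derive. auto_derive. repeat split; auto using ex_derive_Psum.
Qed.

Lemma Bint_correct m N : is_RInt (fun s => s ^ S (S m) * Esum N s) 0 (ln 2) (Bint m N).
Proof.
  apply is_RInt_RInt_continuous_le; [exact ln2_ge0 |].
  intros x _. apply continuous_of_ex_derive. auto_derive. repeat split; auto using ex_derive_Esum.
Qed.

Lemma Bint_value m N : Bint m N = sum_f_R0 (IE (S (S m))) N.
Proof.
  apply is_RInt_unique. assert (Hl := ln2_ge0). unfold Esum.
  induction N as [|N IHN].
  - refine (is_RInt_ext_le _ _ _ _ _ Hl _ (IE_correct _ 0)). intros x _. reflexivity.
  - refine (is_RInt_ext_le _ _ _ _ _ Hl _ (is_RInt_plus_R _ _ _ _ _ _ IHN (IE_correct _ (S N)))).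
    intros x _. rewrite tech5. ring.
Qed.

Lemma is_RInt_gap_majorant k : exists V,
  is_RInt (fun s => 2 * exp (2 * (s - ln 2)) ^ S k + / INR (S (S k))) 0 (ln 2) V
  /\ V <= / INR (S k) + / INR (S (S k)).
Proof.
  pose proof ln2_pos. pose proof ln2_lt_1.
  assert (0 < INR (S k)) by (apply lt_0_INR; lia).
  assert (0 < INR (S (S k))) by (apply lt_0_INR; lia).
  assert (Hd : forall x, 0 <= x <= ln 2 ->
    is_derive (fun s => exp (2 * (s - ln 2)) ^ S k / INR (S k) + s / INR (S (S k))) x
              (2 * exp (2 * (x - ln 2)) ^ S k + / INR (S (S k)))).
  { intros x _. auto_derive; auto. fold_INR. simpl pred. simpl pow.
    rewrite !S_INR in *. field. lra. }
  eexists. split; [exact (is_RInt_derive_le _ _ 0 (ln 2) ltac:(lra) Hd ltac:(continuity_by_derive)) |].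
  cbv beta. rewrite Rminus_diag, Rmult_0_r, exp_0, pow1.
  assert (0 < exp (2 * (0 - ln 2)) ^ S k) by (apply pow_lt, exp_pos).
  assert (0 < / INR (S (S k))) by (apply Rinv_0_lt_compat; lra).
  assert (0 < exp (2 * (0 - ln 2)) ^ S k / INR (S k)) by (apply Rdiv_lt_0_compat; lra).
  assert (ln 2 / INR (S (S k)) <= / INR (S (S k))).
  { unfold Rdiv. rewrite <- (Rmult_1_l (/ INR (S (S k)))) at 2. apply Rmult_le_compat_r; lra. }
  unfold Rdiv in *. lra.
Qed.

Lemma Rabs_Aint_sub_Bint_le m k :
  Rabs (Aint m (S (S k)) - Bint m (S (S k))) <= / INR (S k) + / INR (S (S k)).
Proof.
  destruct (is_RInt_gap_majorant k) as [V [HV HVle]].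
  eapply Rle_trans; [| exact HVle].
  refine (norm_RInt_le _ _ 0 (ln 2) _ V ln2_ge0 _
            (is_RInt_minus_R _ _ _ _ _ _ (Aint_correct m (S (S k))) (Bint_correct m (S (S k)))) HV).
  intros x Hx. eapply Rle_trans; [apply (Rabs_tail_gap_le m (S k) x Hx) |].
  apply Rplus_le_compat_r, Rmult_le_compat_l; [lra |].
  apply pow_incr. split; [| apply exp_sub1_le].
  assert (1 <= exp x) by (rewrite <- exp_0; apply exp_le; lra). lra.
Qed.

Lemma is_lim_seq_Aint_sub_Bint m : is_lim_seq (fun N => Aint m N - Bint m N) 0.
Proof.
  apply (is_lim_seq_incr_n _ 2).
  assert (Hinv : is_lim_seq (fun k => / INR (S k)) 0).
  { replace (Finite 0) with (Rbar_inv p_infty) by reflexivity. apply is_lim_seq_inv; [| discriminate].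
    apply (is_lim_seq_incr_1 INR). apply is_lim_seq_INR. }
  assert (Hb : is_lim_seq (fun k => / INR (S k) + / INR (S (S k))) 0).
  { replace 0 with (0 + 0) by ring. apply is_lim_seq_plus'; [exact Hinv |].
    apply (is_lim_seq_incr_1 (fun k => / INR (S k))). exact Hinv. }
  apply is_lim_seq_le_le with (u := fun k => - (/ INR (S k) + / INR (S (S k))))
                              (w := fun k => / INR (S k) + / INR (S (S k))).
  - intros k. replace (k + 2)%nat with (S (S k)) by lia.
    apply Rabs_le_between, Rabs_Aint_sub_Bint_le.
  - replace (Finite 0) with (Rbar_opp 0) by (simpl; f_equal; ring).
    exact (proj1 (is_lim_seq_opp _ _) Hb).
  - exact Hb.
Qed.

Lemma mzsp_2_ones_m1_expand m N :
  mzsp (2%Z :: ones m ++ (-1)%Z :: nil) N =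
  sumR (fun n => / INR n ^ 2 * Phi m n) N
  - sumR (fun r => lncoef r * (mzsp (2%Z :: ones (m - r) ++ (-1)%Z :: nil) N
                               - mzsp (2%Z :: ones (m - r) ++ 1%Z :: nil) N)) m.
Proof.
  assert (Hdiff : forall i,
    mzsp (2%Z :: ones i ++ (-1)%Z :: nil) N - mzsp (2%Z :: ones i ++ 1%Z :: nil) N
    = sumR (fun n => / INR n ^ 2 * zstar_ones_diff i n) N).
  { intros i. rewrite !mzsp_2, <- sumR_minus. apply sumR_ext.
    intros n _. unfold zstar_ones_diff, zstar_ones_last. ring. }
  rewrite (sumR_ext (fun r => lncoef r * (mzsp (2%Z :: ones (m - r) ++ (-1)%Z :: nil) N
                                         - mzsp (2%Z :: ones (m - r) ++ 1%Z :: nil) N))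
                    (fun r => sumR (fun n => lncoef r * (/ INR n ^ 2 * zstar_ones_diff (m - r) n)) N))
    by (intros; rewrite Hdiff, sumR_scal_l; reflexivity).
  rewrite mzsp_2, <- sumR_swap, <- sumR_minus. apply sumR_ext. intros n _.
  rewrite Phi_expand, sum_f_R0_sumR, lncoef_0, Nat.sub_0_r.
  rewrite (sumR_ext (fun r => lncoef r * (/ INR n ^ 2 * zstar_ones_diff (m - r) n))
                    (fun r => / INR n ^ 2 * (lncoef r * zstar_ones_diff (m - r) n)))
    by (intros; ring).
  rewrite sumR_scal_l. unfold zstar_ones_diff. rewrite zstar_ones_last_1. unfold zstar_ones_last. ring.
Qed.

Lemma sumR_Phi_eq m N :
  sumR (fun n => / INR n ^ 2 * Phi m n) N =
  (-1) ^ m / INR (fact (S m)) *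
    (IE (S (S m)) 0 + sumR (IE (S (S m))) N + (Aint m N - Bint m N) + ln 2 ^ S m * alt_sq_sum N).
Proof.
  assert (HA := is_RInt_unique _ _ _ _ (is_RInt_pow_exp_Psum m N)). fold (Aint m N) in HA.
  rewrite Bint_value, sum_f_R0_sumR.
  unfold Phi.
  rewrite (sumR_ext _ (fun n => (-1) ^ m / INR (fact m) * (/ INR n ^ 2 * (IW m n - IW m 0))))
    by (intros; ring).
  rewrite sumR_scal_l, <- (is_RInt_unique _ _ _ _ (is_RInt_pow_Gsum m N)).
  replace (RInt (fun s => s ^ m * Gsum N s) 0 (ln 2))
    with ((Aint m N + ln 2 ^ S m * alt_sq_sum N) / INR (S m)).
  - rewrite fact_simpl, mult_INR.
    assert (INR (S m) <> 0) by (apply not_0_INR; lia).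
    assert (INR (fact m) <> 0) by apply INR_fact_neq_0.
    field. split; assumption.
  - rewrite HA. field. apply not_0_INR; lia.
Qed.

Definition Phi_limit (m : nat) : R :=
  (-1) ^ m / INR (fact (S m)) *
  (ln 2 ^ S (S (S m)) / INR (S (S (S m)))
   + (INR (fact (S (S m))) * zetaR (S (S (S m)))
      - sum_f_R0 (fun j => INR (fact (S (S m))) / INR (fact j) * ln 2 ^ j
                           * Li (S (S (S m)) - j) (1 / 2))
                 (S (S m)))
   + ln 2 ^ S m * (- (3 / 2) * zetaR 2)).

Lemma is_lim_seq_sumR_Phi m : is_lim_seq (sumR (fun n => / INR n ^ 2 * Phi m n)) (Phi_limit m).
Proof.
  eapply is_lim_seq_ext; [intros N; symmetry; apply sumR_Phi_eq |].
  unfold Phi_limit. rewrite <- IE_p_0, <- (Rplus_0_r (IE _ 0 + _)).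
  apply (is_lim_seq_scal_l _ _ (Finite _)).
  apply is_lim_seq_plus'; [apply is_lim_seq_plus'; [apply is_lim_seq_plus' |] |].
  - apply is_lim_seq_const.
  - apply is_lim_seq_sumR_IE. lia.
  - apply is_lim_seq_Aint_sub_Bint.
  - apply (is_lim_seq_scal_l _ _ (Finite _)), is_lim_seq_alt_sq_sum.
Qed.

Definition zstar_step_diff (i : nat) : R :=
  mzs (2%Z :: ones (i - 1) ++ (-1)%Z :: nil) - mzs (2%Z :: ones i).

Lemma mzs_2_ones_m1_recursion m :
  mzs (2%Z :: ones m ++ (-1)%Z :: nil) =
  Phi_limit m - sumR (fun r => lncoef r * zstar_step_diff (S m - r)) m.
Proof.
  apply mzs_unique.
  eapply is_lim_seq_ext; [intros N; symmetry; apply mzsp_2_ones_m1_expand |].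
  apply is_lim_seq_minus'; [apply is_lim_seq_sumR_Phi |].
  apply is_lim_seq_sumR. intros r Hr.
  apply (is_lim_seq_scal_l _ _ (Finite _)). unfold zstar_step_diff.
  replace (S m - r - 1)%nat with (m - r)%nat by lia.
  replace (S m - r)%nat with (S (m - r)) by lia. rewrite ones_S.
  apply is_lim_seq_minus'; apply is_lim_seq_zstar_2_ones_last; auto.
Qed.

Lemma lncoef_binomial m i : (1 <= i <= m + 1)%nat ->
  lncoef (m + 1 - i) = (-1) ^ m / INR (fact (m + 1)) *
    ((-1) ^ (i - 1) * INR (fact i) * Binomial.C (m + 1) i * ln 2 ^ (m + 1 - i)).
Proof.
  intros Hi. unfold lncoef, Binomial.C.
  replace (m + 1 - (m + 1 - i))%nat with i by lia.
  set (k := (m + 1 - i)%nat). set (j := (i - 1)%nat).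
  replace m with (k + j)%nat at 1 by (unfold k, j; lia).
  rewrite pow_add. replace (- ln 2) with (-1 * ln 2) by ring. rewrite Rpow_mult_distr.
  assert (Hsq : (-1) ^ j * (-1) ^ j = 1)
    by (rewrite <- Rpow_mult_distr; replace (-1 * -1) with 1 by ring; apply pow1).
  assert (INR (fact (m + 1)) <> 0) by apply INR_fact_neq_0.
  assert (INR (fact i) <> 0) by apply INR_fact_neq_0.
  assert (INR (fact k) <> 0) by apply INR_fact_neq_0.
  field_simplify; auto. rewrite <- Rsqr_pow2. unfold Rsqr. rewrite Hsq. field. assumption.
Qed.

Lemma sumR_lncoef_rev m (G : nat -> R) :
  sumR (fun r => lncoef r * G (S m - r)%nat) m =
  (-1) ^ m / INR (fact (m + 1)) *
    sumR (fun i => (-1) ^ (i - 1) * INR (fact i) * Binomial.C (m + 1) i * ln 2 ^ (m + 1 - i) * G i) m.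
Proof.
  rewrite sumR_rev, <- sumR_scal_l. apply sumR_ext. intros i Hi.
  replace (S m - (S m - i))%nat with i by lia.
  replace (S m - i)%nat with (m + 1 - i)%nat by lia.
  rewrite lncoef_binomial by lia. ring.
Qed.

Lemma sum_f_R0_Li_rev p :
  sum_f_R0 (fun j => ln 2 ^ j / INR (fact j) * Li (S p - j) (1 / 2)) p =
  Li (S p) (1 / 2) + sumR (fun j => ln 2 ^ (S p - j) / INR (fact (S p - j)) * Li j (1 / 2)) p.
Proof.
  rewrite sum_f_R0_sumR, sumR_rev, pow_O, Nat.sub_0_r.
  change (INR (fact 0)) with 1. f_equal; [field |]. apply sumR_ext. intros j Hj.
  replace (S p - (S p - j))%nat with j by lia. reflexivity.
Qed.

Lemma Phi_limit_eq m :
  Phi_limit m =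
    INR (m + 2) / INR (fact (m + 3)) * (-1) ^ m * ln 2 ^ (m + 3)
  + INR (m + 2) * (-1) ^ m * (zetaR (m + 3) - Li (m + 3) (1 / 2))
  - INR (m + 2) * (-1) ^ m *
      sumR (fun j => ln 2 ^ (m + 3 - j) / INR (fact (m + 3 - j)) * Li j (1 / 2)) (m + 2)
  - 3 / 2 * (-1) ^ m / INR (fact (m + 1)) * zetaR 2 * ln 2 ^ (m + 1).
Proof.
  unfold Phi_limit.
  rewrite (sum_eq _ (fun j => ln 2 ^ j / INR (fact j) * Li (S (S (S m)) - j) (1 / 2)
                              * INR (fact (S (S m)))))
    by (intros; unfold Rdiv; ring).
  rewrite <- scal_sum, sum_f_R0_Li_rev.
  replace (m + 3)%nat with (S (S (S m))) by lia.
  replace (m + 2)%nat with (S (S m)) by lia.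
  replace (m + 1)%nat with (S m) by lia.
  rewrite !fact_simpl, !mult_INR, !S_INR.
  assert (INR (fact m) <> 0) by apply INR_fact_neq_0.
  assert (0 <= INR m) by apply pos_INR.
  field. repeat split; lra.
Qed.

Theorem theorem2p6 (m : nat) (hm : (1 <= m)%nat) :
  mzs (2%Z :: ones m ++ (-1)%Z :: nil) =
    INR (m + 2) / INR (fact (m + 3)) * (-1) ^ m * (ln 2) ^ (m + 3)
  + INR (m + 2) * (-1) ^ m * (zetaR (m + 3) - Li (m + 3) (1 / 2))
  - INR (m + 2) * (-1) ^ m *
      sumR (fun j => (ln 2) ^ (m + 3 - j) / INR (fact (m + 3 - j)) * Li j (1 / 2)) (m + 2)
  - 3 / 2 * (-1) ^ m / INR (fact (m + 1)) * zetaR 2 * (ln 2) ^ (m + 1)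
  - (-1) ^ m / INR (fact (m + 1)) *
      sumR (fun i => (-1) ^ (i - 1) * INR (fact i) * Binomial.C (m + 1) i
                     * (ln 2) ^ (m + 1 - i)
                     * (mzs (2%Z :: ones (i - 1) ++ (-1)%Z :: nil) - mzs (2%Z :: ones i)))
           m.
Proof.
  rewrite mzs_2_ones_m1_recursion, Phi_limit_eq, sumR_lncoef_rev.
  unfold zstar_step_diff. ring.
Qed.
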